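(* Let $k,h,d\in\mathbb{P}$ and let $b_1,\dots,b_k\in\mathbb{P}$. Let $A=(a,ha+db_1,\dots,ha+db_k)$ with $\gcd(A)=1$ and $\gcd(a,d)=1$, and put $B=(b_1,\dots,b_k)$. Then for every $0\le r\le a-1$, $$N_{dr}=\min\{\,O_B(ma+r)\cdot ha+(ma+r)d \;:\; m\in\mathbb{N}\,\}.$$
   Context: $\mathbb{N}=\{0,1,2,\dots\}$, $\mathbb{P}=\{1,2,\dots\}$. For $A=(a,c_1,\dots,c_k)$ of positive integers with $\gcd(A)=1$ and an integer $r$, $N_r$ denotes the least nonnegative integer $a_0$ with $a_0\equiv r \pmod a$ that can be written as $a_0=\sum_{i=1}^k c_ix_i$ with all $x_i\in\mathbb{N}$ (so $N_r$ depends only on $r \bmod a$). For $B=(b_1,\dots,b_k)$ and an integer $M$, $O_B(M)=\min\{\sum_{i=1}^k x_i : \sum_{i=1}^k b_ix_i=M,\ x_i\in\mathbb{N}\}$ (taken to be $+\infty$ if there is no such representation). *)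

From mathcomp Require Import all_boot.
Set Implicit Arguments. Unset Strict Implicit. Unset Printing Implicit Defensive.

Definition is_least (S : nat -> Prop) (n : nat) : Prop :=
  S n /\ forall m, S m -> n <= m.

(* the set of a0 in N with a0 = r (mod a) representable as sum_i c_i x_i, x_i in N;
   N_r (for A = (a, c_1, ..., c_k)) is its least element *)
Definition N_set (k a : nat) (c : 'I_k -> nat) (r : nat) (a0 : nat) : Prop :=
  a0 = r %[mod a] /\ exists x : 'I_k -> nat, \sum_(i < k) c i * x i = a0.

(* is_O b M o  <->  O_B(M) = o (finite); O_B(M) = +oo iff no o satisfies it *)
Definition is_O (k : nat) (b : 'I_k -> nat) (M o : nat) : Prop :=
  is_least (fun s => exists x : 'I_k -> nat,
              \sum_(i < k) b i * x i = M /\ \sum_(i < k) x i = s) o.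

Definition gcd_tuple (k a : nat) (c : 'I_k -> nat) : nat :=
  gcdn a (\big[gcdn/0]_(i < k) c i).

(** A representation [sum_i c_i x_i] equals
    [h a (sum_i x_i) + d (sum_i b_i x_i)], so it is [= d r (mod a)] exactly when
    [M = sum_i b_i x_i] is [= r (mod a)] (as [a] and [d] are coprime), i.e. when
    [M = m a + r] for some [m].  For fixed [M] the value is smallest when
    [sum_i x_i = O_B(M)], which gives [O_B(m a + r) h a + (m a + r) d].  Hence the
    two sets in the statement have the same minimum; [N_{dr}] exists because
    [gcd(A) = 1] makes every residue mod [a] representable. *)

From mathcomp Require Import all_boot.
From mathcomp Require Import zify.
From Stdlib Require Import Classical.

Lemma is_least_exists (S : nat -> Prop) : (exists n, S n) -> exists n, is_least S n.
Proof.
move=> [n Sn]; apply: NNPP => no_least; elim/ltn_ind: n Sn => n IH Sn.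
apply: no_least; exists n; split=> // m Sm; rewrite leqNgt; apply/negP => lt_mn.
exact: IH m lt_mn Sm.
Qed.

Lemma is_least_sub (S T : nat -> Prop) n :
  (forall v, T v -> S v) -> (forall v, S v -> exists2 w, T w & w <= v) ->
  is_least S n -> is_least T n.
Proof.
move=> subTS domST [Sn n_min]; have [w Tw le_wn] := domST n Sn.
have eq_wn : w = n by apply/eqP; rewrite eqn_leq le_wn n_min //; exact: subTS.
by split=> [|v Tv]; [rewrite -eq_wn | apply/n_min/subTS].
Qed.

Lemma eqn_modMl_coprime a d m n :
  coprime a d -> (d * m == d * n %[mod a]) = (m == n %[mod a]).
Proof.
move=> co_ad; wlog le_nm : m n / n <= m.
  by move=> IH; case/orP: (leq_total n m) => /IH //; rewrite eq_sym [RHS]eq_sym.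
by rewrite !eqn_mod_dvd ?leq_mul2l ?le_nm ?orbT // -mulnBr Gauss_dvdr.
Qed.

Lemma sum_affine_weights k u v (w x : 'I_k -> nat) :
  \sum_(i < k) (u + v * w i) * x i =
  u * \sum_(i < k) x i + v * \sum_(i < k) w i * x i.
Proof.
by rewrite !big_distrr -big_split; apply: eq_bigr => i _; rewrite mulnDl -mulnA.
Qed.

Section ModRepresentable.

Variables (k a : nat) (c : 'I_k -> nat).

Definition mod_representable (t : nat) : Prop :=
  exists x : 'I_k -> nat, \sum_(i < k) c i * x i = t %[mod a].

Lemma mod_representable_eq t1 t2 :
  t1 = t2 %[mod a] -> mod_representable t1 -> mod_representable t2.
Proof. by move=> eq_t [x def_x]; exists x; rewrite def_x eq_t. Qed.

Lemma mod_representable0 : mod_representable 0.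
Proof. by exists (fun _ => 0); rewrite big1 // => i _; rewrite muln0. Qed.

Lemma mod_representable_mod : mod_representable a.
Proof. by apply: mod_representable_eq mod_representable0; rewrite modnn mod0n. Qed.

Lemma mod_representable_weight i : mod_representable (c i).
Proof.
exists (fun j => (j == i) : nat).
by rewrite (bigD1 i) //= eqxx muln1 big1 ?addn0 // => j /negbTE ->; rewrite muln0.
Qed.

Lemma mod_representableD t1 t2 :
  mod_representable t1 -> mod_representable t2 -> mod_representable (t1 + t2).
Proof.
move=> [x1 def_x1] [x2 def_x2]; exists (fun i => x1 i + x2 i).
under eq_bigr => i _ do rewrite mulnDr.
by rewrite big_split /= -modnDm def_x1 def_x2 modnDm.
Qed.

Lemma mod_representableM m t : mod_representable t -> mod_representable (m * t).
Proof.
move=> [x def_x]; exists (fun i => m * x i).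
under eq_bigr => i _ do rewrite mulnCA.
by rewrite -big_distrr /= -modnMmr def_x modnMmr.
Qed.

Lemma mod_representable_gcdn t1 t2 :
  0 < a -> mod_representable t1 -> mod_representable t2 ->
  mod_representable (gcdn t1 t2).
Proof.
move=> a_gt0 rep_t1 rep_t2; have [->|t1_gt0] := posnP t1; first by rewrite gcd0n.
have [u v bezout _] := egcdnP t2 t1_gt0.
(* [v (a - 1) t2] stands for [- v t2] modulo [a]. *)
apply: (@mod_representable_eq (u * t1 + v * (a - 1) * t2)).
  have -> : u * t1 + v * (a - 1) * t2 = v * t2 * a + gcdn t1 t2.
    by rewrite bezout; case: a a_gt0 => // a' _; rewrite subn1 /=; nia.
  exact: modnMDl.
by apply: mod_representableD; apply: mod_representableM.
Qed.

Lemma mod_representable_gcd_tuple : 0 < a -> mod_representable (gcd_tuple a c).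
Proof.
move=> a_gt0; apply: mod_representable_gcdn => //; first exact: mod_representable_mod.
apply: big_ind => [|t1 t2|i _]; first exact: mod_representable0.
  exact: mod_representable_gcdn.
exact: mod_representable_weight.
Qed.

Lemma mod_representable_all t :
  0 < a -> gcd_tuple a c = 1 -> mod_representable t.
Proof.
move=> a_gt0 gen; rewrite -[t]muln1 -gen.
exact/mod_representableM/mod_representable_gcd_tuple.
Qed.

End ModRepresentable.

Section Minimum.

Variables (k h d a r : nat) (b : 'I_k -> nat).

Definition O_set (M s : nat) : Prop :=
  exists x : 'I_k -> nat, \sum_(i < k) b i * x i = M /\ \sum_(i < k) x i = s.

Definition O_candidate (v : nat) : Prop :=
  exists m o, is_O b (m * a + r) o /\ v = o * (h * a) + (m * a + r) * d.

Lemma O_candidate_N_set v :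
  O_candidate v -> N_set a (fun i => h * a + d * b i) (d * r) v.
Proof.
move=> [m [o [[[x [sum_bx sum_x]] _] ->]]]; split.
  by rewrite (_ : _ + _ = (o * h + m * d) * a + d * r) ?modnMDl //; lia.
by exists x; rewrite sum_affine_weights sum_bx sum_x; lia.
Qed.

Hypotheses (coprime_ad : coprime a d) (lt_ra : r < a).

Lemma N_set_dominated v :
  N_set a (fun i => h * a + d * b i) (d * r) v -> exists2 w, O_candidate w & w <= v.
Proof.
move=> [v_mod [x def_v]]; rewrite sum_affine_weights in def_v.
set M := \sum_(i < k) b i * x i in def_v.
have M_mod : M = r %[mod a].
  apply/eqP; rewrite -(@eqn_modMl_coprime a d M r coprime_ad) -v_mod -def_v.
  by rewrite mulnAC modnMDl.
have def_M : M = M %/ a * a + r by rewrite {1}(divn_eq M a) M_mod modn_small.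
have O_M : O_set M (\sum_(i < k) x i) by exists x.
have [o [O_Mo o_min]] := @is_least_exists (O_set M) (ex_intro _ _ O_M).
exists (o * (h * a) + M * d).
  by exists (M %/ a), o; rewrite -def_M.
by rewrite -def_v mulnC (mulnC M) leq_add2r leq_mul2l o_min ?orbT.
Qed.

End Minimum.

Theorem mainTheorem1 (k h d a : nat) (b : 'I_k -> nat) :
  0 < k -> 0 < h -> 0 < d -> 0 < a -> (forall i, 0 < b i) ->
  gcd_tuple a (fun i => h * a + d * b i) = 1 ->
  gcdn a d = 1 ->
  forall r, r <= a - 1 ->
  exists n,
    is_least (N_set a (fun i => h * a + d * b i) (d * r)) n /\
    is_least (fun v => exists m o, is_O b (m * a + r) o /\
                                   v = o * (h * a) + (m * a + r) * d) n.
Proof.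
move=> _ _ _ a_gt0 _ gen gcd_ad r le_r.
have coprime_ad : coprime a d by apply/eqP.
have lt_ra : r < a by lia.
have [x rep_dr] := @mod_representable_all k a _ (d * r) a_gt0 gen.
have [n least_n] : exists n, is_least (N_set a (fun i => h * a + d * b i) (d * r)) n.
  by apply: is_least_exists; eexists; split; [exact: rep_dr | exists x].
exists n; split=> //.
exact: is_least_sub (O_candidate_N_set k h d a r b)
  (N_set_dominated k h d a r b coprime_ad lt_ra) least_n.
Qed.
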